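(* Let $\frac{4}{3}<p\le 1.73$ and $0\le\alpha\le\frac{\pi}{3}$. The function $R(\rho)=\sin^p\rho+\sin^p(\alpha-\rho)$ on $0\le\rho\le\frac{\alpha}{2}$ attains its minimum at one of the endpoints $\rho=0$ or $\rho=\frac{\alpha}{2}$. *)

From HB Require Import structures.
From mathcomp Require Import all_boot all_order all_algebra.
From mathcomp Require Import all_classical all_reals all_analysis.
Import Order.TTheory GRing.Theory Num.Theory.
Local Open Scope ring_scope.

Definition Rfun {R : realType} (p alpha rho : R) : R :=
  (sin rho) `^ p + (sin (alpha - rho)) `^ p.

From HB Require Import structures.
From mathcomp Require Import all_boot all_order all_algebra.
From mathcomp Require Import all_classical all_reals all_analysis.
From mathcomp Require Import ring lra.
Import Order.TTheory GRing.Theory Num.Theory numFieldNormedType.Exports.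
Local Open Scope ring_scope.

Section Rfun.
Context {R : realType}.
Implicit Types (p q u v x y c r alpha : R).

Lemma cos_pi3 : cos (pi / 3) = 1 / 2 :> R.
Proof.
set x := pi / 3.
have c_gt0 : 0 < cos x.
  by apply: cos_gt0_pihalf; have := @pi_gt0 R; rewrite /x => ?; apply/andP; split; lra.
have cos3x : cos (x + (x + x)) = -1.
  by rewrite (_ : x + (x + x) = pi) ?cospi // /x; field.
rewrite cosD cosD sinD in cos3x; have pyth := cos2Dsin2 x.
set c := cos x in c_gt0 cos3x pyth *; set s := sin x in cos3x pyth.
have : (c + 1) * (2 * c - 1) ^+ 2 =
    c * (c * c - s * s) - s * (s * c + c * s) + 1 + 3 * c * (c ^+ 2 + s ^+ 2 - 1).
  by ring.
rewrite cos3x pyth subrr mulr0 addr0 addNr => /eqP.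
by rewrite mulf_eq0 sqrf_eq0 => /orP[] /eqP; lra.
Qed.

Lemma cos_ge_half x : 0 <= x -> x <= pi / 3 -> 1 / 2 <= cos x.
Proof.
move=> x_ge0 x_le; rewrite -cos_pi3; have := @pi_gt0 R => pi_gt0.
by rewrite leNgt ltr_cos ?in_itv/= -?leNgt //; apply/andP; split; lra.
Qed.

Lemma sin_cos3B u v :
  2 * (sin v * cos v ^+ 3 - sin u * cos u ^+ 3) =
  sin (v - u) * (cos (u + v) + (2 * cos (u + v) ^+ 2 - 1) * cos (v - u)).
Proof.
apply/eqP; rewrite -subr_eq0; apply/eqP; rewrite sinB cosD cosB.
have := cos2Dsin2 u; have := cos2Dsin2 v.
(* the expanded difference is a combination of the two Pythagorean relations *)
set su := sin u; set cu := cos u; set sv := sin v; set cv := cos v => pyth_v pyth_u.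
have -> : 2 * (sv * cv ^+ 3 - su * cu ^+ 3) - (sv * cu - cv * su) *
    (cu * cv - su * sv + (2 * (cu * cv - su * sv) ^+ 2 - 1) * (cv * cu + sv * su)) =
  (cu ^+ 2 + su ^+ 2 - 1) * (
   (-2) * su * sv ^+ 4 * cu + (-2) * sv * cv + (-2) * sv * cu ^+ 2 * cv ^+ 3
   + (-2) * su * sv ^+ 2 * cu * cv ^+ 2 + 2 * su ^+ 2 * sv ^+ 3 * cv + 2 * sv ^+ 3 * cv)
  + (cv ^+ 2 + sv ^+ 2 - 1) * (
   2 * su * cu ^+ 3 * cv ^+ 2 + (-2) * sv * cu ^+ 2 * cv + 2 * su * sv ^+ 2 * cu ^+ 3
   + (-2) * su * sv ^+ 2 * cu + 2 * su * cu ^+ 3 + 2 * sv * cv) by ring.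
by rewrite pyth_u pyth_v subrr !mul0r addr0.
Qed.

Lemma sin_cos3_le u v : 0 <= u -> u <= v -> u + v <= pi / 3 ->
  sin u * cos u ^+ 3 <= sin v * cos v ^+ 3.
Proof.
move=> u_ge0 uv uv_le; have := @pi_gt0 R => pi_gt0.
rewrite -subr_ge0 -(pmulr_rge0 _ (ltr0Sn _ 1)) sin_cos3B.
apply: mulr_ge0; first by apply: sin_ge0_pi; apply/andP; split; lra.
have a_ge : 1 / 2 <= cos (u + v) by apply: cos_ge_half; lra.
have b_ge0 : 0 <= cos (v - u) by apply: cos_ge0_pihalf; apply/andP; split; lra.
have := cos_le1 (u + v); have := cos_le1 (v - u).
set a := cos (u + v) in a_ge *; set b := cos (v - u) in b_ge0 * => b_le1 a_le1.
have [w_ge0|w_lt0] := lerP 0 (2 * a ^+ 2 - 1).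
  by apply: addr_ge0; [lra | exact: mulr_ge0].
have -> : a + (2 * a ^+ 2 - 1) * b =
    (2 * a - 1) * (a + 1) + - (2 * a ^+ 2 - 1) * (1 - b) by ring.
by apply: addr_ge0; apply: mulr_ge0; lra.
Qed.

Lemma ler_powR_cube c r q : 1 <= c -> c ^+ 3 <= r -> 1 / 3 <= q -> c <= r `^ q.
Proof.
move=> c_ge1 c3_le q_ge; have c_ge0 : 0 <= c by lra.
rewrite -{1}(powRr1 c_ge0); apply: (le_trans (ler_powR c_ge1 (_ : 1 <= 3 * q))).
  lra.
rewrite powRrM (powR_mulrn 3 c_ge0).
by apply: ge0_ler_powR; rewrite ?nnegrE ?(le_trans _ c3_le) ?exprn_ge0 //; lra.
Qed.

Lemma powR_sin_cos_le p u v : 4 / 3 <= p -> 0 < u -> u <= v -> u + v <= pi / 3 ->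
  sin u `^ (p - 1) * cos u <= sin v `^ (p - 1) * cos v.
Proof.
move=> p_ge u_gt0 uv uv_le; have := @pi_gt0 R => pi_gt0.
have su_gt0 : 0 < sin u by apply: sin_gt0_pi; apply/andP; split; lra.
have cv_gt0 : 0 < cos v by apply: cos_gt0_pihalf; apply/andP; split; lra.
have su_le : sin u <= sin v.
  by rewrite leNgt ltr_sin ?in_itv/= -?leNgt //; apply/andP; split; lra.
have cv_le : cos v <= cos u.
  by rewrite leNgt ltr_cos ?in_itv/= -?leNgt //; apply/andP; split; lra.
have := @sin_cos3_le u v (ltW u_gt0) uv uv_le.
set su := sin u in su_gt0 su_le *; set sv := sin v in su_le *.
set cu := cos u in cv_le *; set cv := cos v in cv_gt0 cv_le * => sc3_le.
have -> : sv = sv / su * su by rewrite divfK ?gt_eqF.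
have -> : cu = cu / cv * cv by rewrite divfK ?gt_eqF.
have su_ge0 := ltW su_gt0; have cv_ge0 := ltW cv_gt0.
rewrite powRM ?divr_ge0 ?(le_trans su_ge0) // mulrCA -mulrA.
rewrite ler_wpM2r ?mulr_ge0 ?powR_ge0 //.
apply: ler_powR_cube; rewrite ?ler_pdivlMr ?mul1r //; last lra.
by rewrite expr_div_n mulrAC ler_pdivrMr ?exprn_gt0 // mulrC.
Qed.

Lemma is_derive_Rfun p alpha x : 0 < x -> x < alpha -> alpha <= pi ->
  is_derive x 1 (Rfun p alpha)
    (p * (sin x `^ (p - 1) * cos x - sin (alpha - x) `^ (p - 1) * cos (alpha - x))).
Proof.
move=> x_gt0 x_lt alpha_le.
have sx_gt0 : 0 < sin x by apply: sin_gt0_pi; apply/andP; split; lra.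
have sax_gt0 : 0 < sin (alpha - x) by apply: sin_gt0_pi; apply/andP; split; lra.
have d_reflect : is_derive x 1 (fun y => alpha - y) (-1).
  by rewrite -[-1]add0r; apply: is_deriveB.
have d_sin_reflect : is_derive x 1 (sin \o (fun y => alpha - y)) (cos (alpha - x) * -1).
  exact: is_derive1_comp.
have := is_deriveD (is_derive1_comp (is_derive1_powR p sx_gt0) (is_derive_sin x))
  (is_derive1_comp (is_derive1_powR p sax_gt0) d_sin_reflect).
by rewrite mulrN1 mulrN -!mulrA -mulrBr.
Qed.

Lemma Rfun_nonincreasing p alpha : 4 / 3 <= p -> alpha <= pi / 3 ->
  {in `]0, alpha / 2] &, {homo Rfun p alpha : x y /~ x <= y}}.
Proof.
move=> p_ge alpha_le; have := @pi_gt0 R => pi_gt0.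
have dR x : x \in `]0, alpha / 2[ -> is_derive x 1 (Rfun p alpha)
    (p * (sin x `^ (p - 1) * cos x - sin (alpha - x) `^ (p - 1) * cos (alpha - x))).
  by rewrite in_itv/= => /andP[x_gt0 x_lt]; apply: is_derive_Rfun; lra.
apply: ler0_derive1_le_oc => [x /dR[] // | x x_in | ].
  rewrite derive1E; have [_ ->] := dR x x_in.
  move: x_in; rewrite in_itv/= => /andP[x_gt0 x_lt].
  rewrite pmulr_rle0 ?subr_le0; last lra.
  by apply: powR_sin_cos_le; lra.
apply: continuous_in_subspaceT => x; rewrite inE/= in_itv/= => /andP[x_gt0 x_le].
apply/differentiable_continuous/derivable1_diffP.
by have [] := @is_derive_Rfun p alpha x x_gt0 ltac:(lra) ltac:(lra).
Qed.

Lemma two_le_powR y p : 0 <= y -> 3 <= y ^+ 2 -> 4 / 3 <= p -> 2 <= y `^ p.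
Proof.
move=> y_ge0 y2_ge p_ge.
apply: (le_trans _ (ler_powR _ p_ge)); last by nra.
rewrite -(ler_pXn2r (_ : 0 < 3)%N) ?nnegrE ?powR_ge0 //.
rewrite -[leRHS]powR_mulrn ?powR_ge0 // -powRrM (_ : 4 / 3 * 3%:R = 4%:R); last by field.
by rewrite powR_mulrn // (_ : 4 = 2 * 2)%N // exprM; nra.
Qed.

Lemma Rfun_half_le_Rfun0 p alpha : 4 / 3 <= p -> 0 <= alpha -> alpha <= pi / 3 ->
  Rfun p alpha (alpha / 2) <= Rfun p alpha 0.
Proof.
move=> p_ge alpha_ge0 alpha_le; have := @pi_gt0 R => pi_gt0.
rewrite /Rfun sin0 powR0 ?add0r ?subr0; last by apply/eqP; lra.
have -> : alpha - alpha / 2 = alpha / 2 by field.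
have alpha_half : alpha = (alpha / 2) *+ 2 by rewrite mulr2n; field.
have c_ge0 : 0 <= cos (alpha / 2) by apply: cos_ge0_pihalf; apply/andP; split; lra.
have s_ge0 : 0 <= sin (alpha / 2) by apply: sin_ge0_pi; apply/andP; split; lra.
have sin_alpha : sin alpha = 2 * cos (alpha / 2) * sin (alpha / 2).
  by rewrite {1}alpha_half sin_mulr2n mulr2n; ring.
have cos_alpha : cos alpha = 2 * cos (alpha / 2) ^+ 2 - 1.
  by rewrite {1}alpha_half cos_mulr2n mulr2n; ring.
have := @cos_ge_half alpha alpha_ge0 alpha_le; rewrite cos_alpha => cos_ge.
rewrite sin_alpha powRM ?mulr_ge0 // -mulr2n -[_ `^ p *+ 2]mulr_natl.
apply: ler_wpM2r; first exact: powR_ge0.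
by apply: two_le_powR => //; [exact: mulr_ge0 | nra].
Qed.

End Rfun.

Theorem lemma2p8 (R : realType) (p alpha : R) :
  4 / 3 < p -> p <= 173 / 100 -> 0 <= alpha -> alpha <= pi / 3 ->
  (forall rho : R, 0 <= rho -> rho <= alpha / 2 ->
     Rfun p alpha 0 <= Rfun p alpha rho) \/
  (forall rho : R, 0 <= rho -> rho <= alpha / 2 ->
     Rfun p alpha (alpha / 2) <= Rfun p alpha rho).
Proof.
move=> /ltW p_ge _ alpha_ge0 alpha_le; right => rho rho_ge0 rho_le.
have [->|rho_neq0] := eqVneq rho 0; first exact: Rfun_half_le_Rfun0.
have rho_gt0 : 0 < rho by rewrite lt_def rho_neq0.
apply: (Rfun_nonincreasing _ _ p_ge alpha_le _ _ _ _ rho_le).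
  by rewrite in_itv/= lexx (lt_le_trans rho_gt0).
by rewrite in_itv/= rho_gt0.
Qed.
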